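(* Let $\Delta$ be a simplicial complex on $[n]$ with facets $F_1,\ldots,F_t$. Then $\Delta$ is a quasi-tree if and only if the matrix $M_\Delta$ contains a $(t-1)\times t$ submatrix $M^\sharp_\Delta$ (formed by $t-1$ of its rows) with the property that, for each $1\leq j\leq t$, the $(t-1)\times(t-1)$ matrix $M^\sharp_\Delta(j)$ obtained by deleting the $j$th column of $M^\sharp_\Delta$ satisfies $\det(M^\sharp_\Delta(j))=\pm\, x_{[n]}/x_{F_j}$.
   Context: $S=K[x_1,\ldots,x_n]$, $x_F=\prod_{i\in F}x_i$. A simplicial complex on $[n]$ is a collection of subsets of $[n]$ containing all singletons and closed under taking subsets; facets are maximal faces. $M_\Delta$ is the $\binom t2\times t$ matrix over $S$ with rows indexed by pairs $(i,j)$, $1\le i<j\le t$, and columns by $k\in[t]$, whose entries are $a^{(i,j)}_i=x_{F_i\setminus F_j}$, $a^{(i,j)}_j=x_{F_j\setminus F_i}$, and $a^{(i,j)}_k=0$ for $k\notin\{i,j\}$. A facet $F$ is a leaf if either it is the only facet, or there is a facet $G\neq F$ with $H\cap F\subseteq G\cap F$ for every facet $H\neq F$. $\Delta$ is a quasi-tree if its facets can be labeled so that, in this labeling $G_1,\ldots,G_m$, each $G_i$ is a leaf of the complex generated by $G_1,\ldots,G_i$. *)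

From HB Require Import structures.
From mathcomp Require Import all_boot all_order all_algebra.
From mathcomp Require Import all_fingroup.
From mathcomp Require Import mpoly.
Set Implicit Arguments. Unset Strict Implicit. Unset Printing Implicit Defensive.
Import GRing.Theory.
Local Open Scope ring_scope.

Definition xmon (K : fieldType) (n : nat) (F : {set 'I_n}) : {mpoly K[n]} :=
  \prod_(i in F) 'X_i.

(* A family F : 'I_t -> {set 'I_n} is the (labeled) list of facets of a
   simplicial complex on [n]: facets pairwise incomparable (hence distinct,
   all maximal), every vertex lies in some facet (singletons are faces),
   and there is at least one facet (the empty set is always a face). *)
Definition facet_family (n t : nat) (F : 'I_t -> {set 'I_n}) : Prop :=
  [/\ (0 < t)%N,
      (forall i j : 'I_t, i != j -> ~~ (F i \subset F j)) &
      (forall v : 'I_n, exists i : 'I_t, v \in F i)].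

Definition is_leaf (n t : nat) (F : 'I_t -> {set 'I_n}) (A : {set 'I_t})
    (i : 'I_t) : Prop :=
  A = [set i] \/
  exists2 g : 'I_t, (g \in A) && (g != i) &
    forall h : 'I_t, h \in A -> h != i -> F h :&: F i \subset F g :&: F i.

Definition quasi_tree (n t : nat) (F : 'I_t -> {set 'I_n}) : Prop :=
  exists s : {perm 'I_t},
    forall k : 'I_t, is_leaf F [set s j | j in [set j : 'I_t | (j <= k)%N]] (s k).

Definition pair_idx (t : nat) : finType := sig (fun p : 'I_t * 'I_t => (p.1 < p.2)%N).

Definition Mentry (K : fieldType) (n t : nat) (F : 'I_t -> {set 'I_n})
    (p : 'I_t * 'I_t) (k : 'I_t) : {mpoly K[n]} :=
  if k == p.1 then xmon K (F p.1 :\: F p.2)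
  else if k == p.2 then xmon K (F p.2 :\: F p.1)
  else 0.

(* The binom(t,2) x t matrix M_Delta (rows enumerated by the finType of
   pairs i<j; the row order is irrelevant for the statement). *)
Definition MDelta (K : fieldType) (n t : nat) (F : 'I_t -> {set 'I_n})
  : 'M[{mpoly K[n]}]_(#|[set: pair_idx t]|, t) :=
  \matrix_(r < #|[set: pair_idx t]|, k < t) Mentry K F (val (enum_val r)) k.

(* Read the t-1 chosen rows of M_Delta as the edges of a graph on the facets:
   the row of {i, j} has just two nonzero entries, x_{F_i \ F_j} and
   x_{F_j \ F_i}.  Both directions go by induction on t, removing a leaf.
   If F_c is a leaf with branch F_b, add the edge {c, b}: expanding a maximal
   minor along column c (along the row of {c, b} for the minor omitting c)
   factors x_[n] / x_{F_j} as x_{F_c \ F_b} (resp. x_{F_b \ F_c}) times the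
   corresponding monomial of the complex without F_c.  Conversely, t-1 edges on
   t vertices leave a vertex c of degree at most one.  Degree zero would make a
   minor vanish; for a pendant edge {c, b}, x_{F_c \ F_b} divides the minor
   omitting F_h, so F_h :&: F_c \subset F_b and F_c is a leaf. *)

From HB Require Import structures.
From mathcomp Require Import all_boot all_order all_algebra.
From mathcomp Require Import all_fingroup.
From mathcomp Require Import mpoly.
From mathcomp Require Import zify.
Set Implicit Arguments. Unset Strict Implicit. Unset Printing Implicit Defensive.
Import GRing.Theory.

Section QuasiTree.
Variable n : nat.

Lemma is_leaf_inj_imset a b (f : 'I_a -> 'I_b) (F : 'I_b -> {set 'I_n})
    (A : {set 'I_a}) i :
  injective f -> is_leaf F (f @: A) (f i) <-> is_leaf (F \o f) A i.
Proof.
move=> f_inj; split.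
- case=> [AE|[g /andP[gA gi] Hg]]; [left|right].
    apply/setP=> x; move/setP: AE => /(_ (f x)).
    by rewrite mem_imset // !inE (inj_eq f_inj).
  case/imsetP: gA => g' g'A ->{g} in gi Hg *; exists g'.
    by rewrite g'A -(inj_eq f_inj) gi.
  move=> h hA hi; apply: Hg; first exact: imset_f.
  by rewrite (inj_eq f_inj).
- case=> [->|[g /andP[gA gi] Hg]]; [left|right].
    by rewrite imset_set1.
  exists (f g); first by rewrite imset_f // (inj_eq f_inj) gi.
  by move=> _ /imsetP[h hA ->]; rewrite (inj_eq f_inj); apply: Hg.
Qed.

Definition branch t (F : 'I_t -> {set 'I_n}) c b :=
  b != c /\ forall h, h != c -> F h :&: F c \subset F b.

Lemma branch_mem t (F : 'I_t -> {set 'I_n}) c b h v :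
  branch F c b -> h != c -> v \in F h -> v \in F c -> v \in F b.
Proof. by case=> _ Hb hc vh vc; apply: (subsetP (Hb h hc)); rewrite inE vh vc. Qed.

Lemma initial_segment_max m :
  [set j : 'I_m.+1 | (j <= @ord_max m)%N] = setT.
Proof. by apply/setP=> x; rewrite !inE -ltnS ltn_ord. Qed.

Lemma initial_segment_lift_max m (k : 'I_m.+1) :
  [set j : 'I_m.+2 | (j <= lift ord_max k)%N] =
  lift ord_max @: [set j : 'I_m.+1 | (j <= k)%N].
Proof.
apply/setP=> x; rewrite inE lift_max; case: (unliftP ord_max x) => [x' ->|->].
  by rewrite mem_imset ?inE ?lift_max //; apply: lift_inj.
rewrite leqNgt ltnS leq_ord /=; apply/esym/imsetP=> -[y _ /eqP].
by rewrite eq_liftF.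
Qed.

Lemma imset_perm_setT (T : finType) (s : {perm T}) : s @: setT = setT.
Proof. by apply: im_perm_on; apply/subsetP. Qed.

Lemma quasi_tree1 (F : 'I_1 -> {set 'I_n}) : quasi_tree F.
Proof.
exists 1%g => k; left; apply/setP=> x.
by rewrite (ord1 x) (ord1 k) perm1 initial_segment_max imset_perm1 !inE.
Qed.

Lemma quasi_tree_add_leaf m (F : 'I_m.+2 -> {set 'I_n}) c b :
  branch F c b -> quasi_tree (F \o lift c) -> quasi_tree F.
Proof.
move=> [bc Hb] [s Hs]; exists (lift_perm ord_max c s) => k.
case: (unliftP ord_max k) => [k' ->|->].
  rewrite lift_perm_lift initial_segment_lift_max -imset_comp.
  rewrite (eq_imset _ (lift_perm_lift ord_max c s)) imset_comp.
  by apply/is_leaf_inj_imset; [apply: lift_inj | apply: Hs].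
rewrite initial_segment_max imset_perm_setT lift_perm_id.
right; exists b; first by rewrite inE bc.
by move=> h _ hc; rewrite subsetI subsetIr andbT; apply: Hb.
Qed.

Lemma quasi_tree_remove_leaf m (F : 'I_m.+2 -> {set 'I_n}) :
  quasi_tree F -> exists c b, branch F c (lift c b) /\ quasi_tree (F \o lift c).
Proof.
move=> [s Hs]; set c := s ord_max.
have := Hs ord_max; rewrite initial_segment_max imset_perm_setT -/c.
case=> [Tc|[b /andP[_ bc] Hb]].
  have : lift c ord0 \in [set c] by rewrite -Tc inE.
  by rewrite inE lift_eqF.
case: (unliftP c b) bc Hb => [b' ->|->]; last by rewrite eqxx.
move=> bc Hb; exists c, b'; split.
  by split=> // h hc; have /subsetIP[] := Hb h (in_setT _) hc.
pose f k := odflt ord0 (unlift c (s (lift ord_max k))).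
have fK k : lift c (f k) = s (lift ord_max k).
  rewrite /f; case: (unliftP c (s (lift ord_max k))) => [x -> //|].
  by move/perm_inj/eqP; rewrite lift_eqF.
have f_inj : injective f.
  by move=> x y /(congr1 (lift c)); rewrite !fK => /perm_inj/lift_inj.
exists (perm f_inj) => k; apply/(is_leaf_inj_imset _ _ _ (@lift_inj _ c)).
have liftE : lift c \o perm f_inj =1 s \o lift ord_max by move=> x /=; rewrite permE fK.
rewrite -imset_comp (eq_imset _ liftE) imset_comp -initial_segment_lift_max.
by rewrite -[lift c _]/((lift c \o perm f_inj) k) liftE; apply: Hs.
Qed.

End QuasiTree.
Local Open Scope ring_scope.

Definition eq_up_to_sign (R : zmodType) (x y : R) := y = x \/ y = - x.

Section EqUpToSign.
Variable R : pzRingType.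
Implicit Types x y z a : R.

Lemma eq_up_to_sign_refl x : eq_up_to_sign x x.
Proof. by left. Qed.

Lemma eq_up_to_sign_sym x y : eq_up_to_sign x y -> eq_up_to_sign y x.
Proof. by case=> ->; [left | right; rewrite opprK]. Qed.

Lemma eq_up_to_sign_trans x y z :
  eq_up_to_sign x y -> eq_up_to_sign y z -> eq_up_to_sign x z.
Proof. by case=> ->; case=> ->; rewrite ?opprK; [left|right|right|left]. Qed.

Lemma eq_up_to_sign_signr k x : eq_up_to_sign x ((-1) ^+ k * x).
Proof.
by rewrite -signr_odd; case: (odd k); rewrite ?expr1 ?mulN1r ?mul1r; [right|left].
Qed.

Lemma eq_up_to_sign_mul2l a x y :
  eq_up_to_sign x y -> eq_up_to_sign (a * x) (a * y).
Proof. by case=> ->; rewrite ?mulrN; [left|right]. Qed.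

End EqUpToSign.

Lemma eq_up_to_sign_mulIl (R : idomainType) (a x y : R) : a != 0 ->
  eq_up_to_sign (a * x) (a * y) -> eq_up_to_sign x y.
Proof. by move=> a0; case; rewrite -?mulrN => /(mulfI a0) ->; [left|right]. Qed.

Section Monomials.
Variables (K : fieldType) (n : nat).
Implicit Types S T : {set 'I_n}.

Lemma meval_xmon (w : 'I_n -> K) S : meval w (xmon K S) = \prod_(i in S) w i.
Proof. by rewrite rmorph_prod; apply: eq_bigr => i _; apply: mevalXU. Qed.

Lemma xmon_neq0 S : xmon K S != 0.
Proof.
apply/eqP=> /(congr1 (meval (fun=> 1))).
by rewrite meval_xmon meval0 big1 //; apply/eqP/oner_neq0.
Qed.

Lemma xmonU S T : [disjoint S & T] -> xmon K (S :|: T) = xmon K S * xmon K T.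
Proof.
move=> ST; rewrite /xmon -(bigU _ _ _ ST).
by apply: eq_bigl => i; rewrite !inE.
Qed.

Lemma eq_up_to_sign_xmonM_subset S T P :
  eq_up_to_sign (xmon K T) (xmon K S * P) -> S \subset T.
Proof.
move=> ST; apply/subsetP=> v vS; apply/negPn/negP=> vT.
pose w i : K := (i \in T)%:R.
have wT : meval w (xmon K T) = 1 by rewrite meval_xmon big1 // => i iT; rewrite /w iT.
have wS : meval w (xmon K S) = 0 by rewrite meval_xmon (bigD1 v) //= /w (negbTE vT) mul0r.
by case: ST => /(congr1 (meval w)) /eqP;
  rewrite ?mevalN mevalM wT wS mul0r eq_sym ?oppr_eq0 oner_eq0.
Qed.

End Monomials.

Lemma lift_lift_comm m (c : 'I_m.+2) (j c' : 'I_m.+1) (k : 'I_m) :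
  lift (lift c j) c' = c -> lift (lift c j) (lift c' k) = lift c (lift j k).
Proof.
move=> /(congr1 val) /= cE; apply: val_inj => /=; move: cE.
rewrite /bump; case: (leqP c j); case: (leqP j k); case: (leqP c' k) => /=; lia.
Qed.

Section DetExpansion.
Variables (R : comPzRingType) (m : nat) (N : 'M[R]_(m.+1, m.+2)).
Variables (e : 'I_m.+1) (c : 'I_m.+2).

Lemma det_col'_expand_col j :
  (forall e', e' != e -> N e' c = 0) ->
  eq_up_to_sign (N e c * \det (col' j (row' e (col' c N))))
                (\det (col' (lift c j) N)).
Proof.
move=> Nc0; have [c' c'E] : exists c', lift (lift c j) c' = c.
  case: (unliftP (lift c j) c) => [c' cE|cE]; first by exists c'.
  by move: (neq_lift c j); rewrite -cE eqxx.
rewrite (expand_det_col _ c') (bigD1 e) //= big1 ?addr0; last first.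
  by move=> i ie; rewrite mxE c'E Nc0 // mul0r.
rewrite mxE c'E /cofactor mulrCA.
have -> : row' e (col' c' (col' (lift c j) N)) = col' j (row' e (col' c N)).
  by apply/matrixP=> a b; rewrite !mxE lift_lift_comm.
exact: eq_up_to_sign_signr.
Qed.

Lemma det_col'_expand_row b :
  (forall k, k != c -> k != lift c b -> N e k = 0) ->
  eq_up_to_sign (N e (lift c b) * \det (col' b (row' e (col' c N))))
                (\det (col' c N)).
Proof.
move=> Ne0; rewrite (expand_det_row _ e) (bigD1 b) //= big1 ?addr0; last first.
  move=> i ib; rewrite mxE Ne0 ?mul0r ?(inj_eq (@lift_inj _ c)) //.
  by rewrite lift_eqF.
rewrite mxE /cofactor mulrCA.
have -> : row' e (col' b (col' c N)) = col' b (row' e (col' c N)).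
  by apply/matrixP=> x y; rewrite !mxE.
exact: eq_up_to_sign_signr.
Qed.

End DetExpansion.

Definition facet_union n t (F : 'I_t -> {set 'I_n}) := \bigcup_(i < t) F i.

Section LeafComplement.
Variables (K : fieldType) (n m : nat) (F : 'I_m.+2 -> {set 'I_n}).
Variables (c : 'I_m.+2) (b : 'I_m.+1).
Hypothesis Fcb : branch F c (lift c b).
Let F' := F \o lift c.

Let Fb v i : v \in F (lift c i) -> v \in F c -> v \in F (lift c b).
Proof. by apply: branch_mem Fcb _; rewrite lift_eqF. Qed.

Lemma xmon_compl_lift h :
  xmon K (facet_union F :\: F (lift c h)) =
  xmon K (F c :\: F (lift c b)) * xmon K (facet_union F' :\: F' h).
Proof.
rewrite -xmonU; last first.
  rewrite -setI_eq0; apply/eqP/setP=> v; rewrite !inE.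
  apply/negP=> /and3P[/andP[vb vc] _ /bigcupP[i _ vi]].
  by rewrite (Fb vi vc) in vb.
congr xmon; apply/setP=> v; rewrite !inE; apply/andP/orP.
  case=> vh /bigcupP[i _]; case: (unliftP c i) => [i' ->|->] vi.
    by right; rewrite vh; apply/bigcupP; exists i'.
  case vb: (v \in F (lift c b)); last by left; rewrite vi.
  by right; rewrite vh; apply/bigcupP; exists b.
case=> [/andP[vb vc]|/andP[vh /bigcupP[i _ vi]]].
  split; last by apply/bigcupP; exists c.
  by apply: contra vb => /Fb; apply.
by split=> //; apply/bigcupP; exists (lift c i).
Qed.

Lemma xmon_compl_leaf :
  xmon K (facet_union F :\: F c) =
  xmon K (F (lift c b) :\: F c) * xmon K (facet_union F' :\: F' b).
Proof.
rewrite -xmonU; last first.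
  rewrite -setI_eq0; apply/eqP/setP=> v; rewrite !inE /F' /=.
  by case: (v \in F (lift c b)); rewrite ?andbF.
congr xmon; apply/setP=> v; rewrite !inE; apply/andP/orP.
  case=> vc /bigcupP[i _]; case: (unliftP c i) => [i' ->|->] vi; last by rewrite vi in vc.
  case vb: (v \in F (lift c b)); first by left; rewrite vc.
  by right; apply/bigcupP; exists i'.
case=> [/andP[vb vc]|/andP[vb /bigcupP[i _ vi]]].
  by split=> //; apply/bigcupP; exists (lift c b).
split; last by apply/bigcupP; exists (lift c i).
by apply: contra vb => /(Fb vi).
Qed.

End LeafComplement.

Section PairMatrix.
Variables (K : fieldType) (n t : nat) (F : 'I_t -> {set 'I_n}).

Lemma Mentry_swap (p : 'I_t * 'I_t) :
  p.1 != p.2 -> Mentry K F (p.2, p.1) =1 Mentry K F p.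
Proof.
case: p => a b /= ab k; rewrite /Mentry /=.
by case: (eqVneq k a) => [->|ka]; [rewrite (negbTE ab) | case: (eqVneq k b)].
Qed.

Lemma Mentry_fst a b : Mentry K F (a, b) a = xmon K (F a :\: F b).
Proof. by rewrite /Mentry /= eqxx. Qed.

Lemma Mentry_snd a b : a != b -> Mentry K F (a, b) b = xmon K (F b :\: F a).
Proof. by move=> ab; rewrite /Mentry /= eq_sym (negbTE ab) eqxx. Qed.

Lemma Mentry_out p k : k != p.1 -> k != p.2 -> Mentry K F p k = 0.
Proof. by move=> k1 k2; rewrite /Mentry (negbTE k1) (negbTE k2). Qed.

Definition pair_mx r (E : 'I_r -> 'I_t * 'I_t) : 'M[{mpoly K[n]}]_(r, t) :=
  \matrix_(e, k) Mentry K F (E e) k.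

End PairMatrix.

Definition lift_pair m (c : 'I_m.+1) (p : 'I_m * 'I_m) := (lift c p.1, lift c p.2).

Lemma lift_pair_inj m (c : 'I_m.+1) : injective (lift_pair c).
Proof.
move=> [a1 a2] [b1 b2] E.
by rewrite [a1](lift_inj (congr1 fst E)) [a2](lift_inj (congr1 snd E)).
Qed.

Lemma Mentry_lift (K : fieldType) n m (F : 'I_m.+2 -> {set 'I_n}) c p k :
  Mentry K F (lift_pair c p) (lift c k) = Mentry K (F \o lift c) p k.
Proof. by rewrite /Mentry /= !(inj_eq (@lift_inj _ c)). Qed.

(* Stated with [facet_union F] in place of [[n]], so that it passes to the
   complex with a leaf removed. *)
Definition monomial_minors (K : fieldType) n m (F : 'I_m.+1 -> {set 'I_n})
    (E : 'I_m -> 'I_m.+1 * 'I_m.+1) :=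
  forall j, eq_up_to_sign (xmon K (facet_union F :\: F j))
                          (\det (col' j (pair_mx K F E))).

Definition incident r t (E : 'I_r -> 'I_t * 'I_t) e c :=
  (c == (E e).1) || (c == (E e).2).

Definition degree r t (E : 'I_r -> 'I_t * 'I_t) c := (\sum_e incident E e c)%N.

Lemma exists_degree_le1 m (E : 'I_m.+1 -> 'I_m.+2 * 'I_m.+2) :
  (forall e, (E e).1 != (E e).2) -> exists c, (degree E c <= 1)%N.
Proof.
move=> E12; have [c|deg2] := pickP (fun c => degree E c <= 1)%N; first by exists c.
have deg_sum : (\sum_c degree E c = 2 * m.+1)%N.
  rewrite exchange_big /= mulnC -[in RHS](card_ord m.+1) -sum_nat_const.
  apply: eq_bigr => e _; rewrite /incident (bigD1 (E e).1) //= eqxx (bigD1 (E e).2) /=.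
    by rewrite eqxx orbT big1 // => i /andP[/negbTE-> /negbTE->].
  by rewrite eq_sym E12.
have : (\sum_(c < m.+2) 2 <= \sum_c degree E c)%N.
  by apply: leq_sum => c _; rewrite ltnNge deg2.
by rewrite deg_sum sum_nat_const card_ord; lia.
Qed.

Section PendantEdge.
Variables (K : fieldType) (n m : nat) (F : 'I_m.+2 -> {set 'I_n}).
Variables (E : 'I_m.+1 -> 'I_m.+2 * 'I_m.+2) (E' : 'I_m -> 'I_m.+1 * 'I_m.+1).
Variables (e : 'I_m.+1) (c : 'I_m.+2) (b : 'I_m.+1).
Hypothesis E_pendant : E e = (c, lift c b) \/ E e = (lift c b, c).
Hypothesis E_lift : forall e', E (lift e e') = lift_pair c (E' e').
Let N := pair_mx K F E.
Let F' := F \o lift c.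

Lemma Mentry_pendant : Mentry K F (E e) =1 Mentry K F (c, lift c b).
Proof.
case: E_pendant => -> k //.
by apply: (@Mentry_swap _ _ _ F (c, lift c b)); rewrite /= neq_lift.
Qed.

Lemma pair_mx_pendant_col e' : e' != e -> N e' c = 0.
Proof.
case: (unliftP e e') => [e'' ->|->]; last by rewrite eqxx.
by rewrite mxE E_lift Mentry_out //= ?neq_lift // lift_eqF.
Qed.

Lemma pair_mx_pendant_row k : k != c -> k != lift c b -> N e k = 0.
Proof. by move=> kc kb; rewrite mxE Mentry_pendant Mentry_out. Qed.

Lemma pair_mx_remove_pendant : row' e (col' c N) = pair_mx K F' E'.
Proof. by apply/matrixP=> i k; rewrite !mxE E_lift Mentry_lift. Qed.

Lemma det_col'_lift_pendant j :
  eq_up_to_sign (xmon K (F c :\: F (lift c b)) * \det (col' j (pair_mx K F' E')))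
                (\det (col' (lift c j) N)).
Proof.
have := det_col'_expand_col j pair_mx_pendant_col.
by rewrite mxE Mentry_pendant Mentry_fst pair_mx_remove_pendant.
Qed.

Lemma monomial_minors_branch : monomial_minors K F E -> branch F c (lift c b).
Proof.
move=> minorsF; split; first by rewrite lift_eqF.
move=> h; case: (unliftP c h) => [j ->|->]; last by rewrite eqxx.
move=> _; apply/subsetP=> v /setIP[vh vc]; apply/negPn/negP=> vb.
have := eq_up_to_sign_trans (minorsF (lift c j))
  (eq_up_to_sign_sym (det_col'_lift_pendant j)).
move/eq_up_to_sign_xmonM_subset/subsetP/(_ v).
by rewrite !inE vb vc vh => /(_ isT).
Qed.

Lemma monomial_minors_remove_pendant : branch F c (lift c b) ->
  monomial_minors K F E <-> monomial_minors K F' E'.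
Proof.
move=> Fcb; split=> minors j.
  apply: (eq_up_to_sign_mulIl (xmon_neq0 K (F c :\: F (lift c b)))).
  rewrite -xmon_compl_lift //; apply: eq_up_to_sign_trans (minors (lift c j)) _.
  exact/eq_up_to_sign_sym/det_col'_lift_pendant.
case: (unliftP c j) => [j' ->|->].
  rewrite (xmon_compl_lift K Fcb); apply: eq_up_to_sign_trans (det_col'_lift_pendant j').
  exact/eq_up_to_sign_mul2l/minors.
rewrite (xmon_compl_leaf K Fcb).
have := det_col'_expand_row pair_mx_pendant_row.
rewrite mxE Mentry_pendant Mentry_snd ?neq_lift // pair_mx_remove_pendant.
by apply: eq_up_to_sign_trans; apply/eq_up_to_sign_mul2l/minors.
Qed.

End PendantEdge.

Lemma exists_pendant_edge m (E : 'I_m.+1 -> 'I_m.+2 * 'I_m.+2) c :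
  (forall e, (E e).1 != (E e).2) -> degree E c = 1%N ->
  exists e b (E' : 'I_m -> 'I_m.+1 * 'I_m.+1),
    [/\ E e = (c, lift c b) \/ E e = (lift c b, c),
        forall e', E (lift e e') = lift_pair c (E' e') &
        forall e', (E' e').1 != (E' e').2].
Proof.
move=> E12 deg1; have [e /= inc_e|inc0] := pickP (incident E ^~ c); last first.
  by move: deg1; rewrite /degree big1 // => e _; rewrite inc0.
have inc_lift e' : ~~ incident E (lift e e') c.
  apply/negP=> inc_e'; move: deg1.
  by rewrite /degree (bigD1 e) // (bigD1 (lift e e')) ?lift_eqF //= inc_e inc_e'.
pose unl (x : 'I_m.+2) := odflt ord0 (unlift c x).
have unlK x : x != c -> lift c (unl x) = x.
  by rewrite /unl; case: (unliftP c x) => [y ->|->] //; rewrite eqxx.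
have [E1c E2c] :
    (forall e', (E (lift e e')).1 != c) /\ (forall e', (E (lift e e')).2 != c).
  by split=> e'; move: (inc_lift e'); rewrite negb_or ![c == _]eq_sym => /andP[].
have [b E_pendant] : exists b, E e = (c, lift c b) \/ E e = (lift c b, c).
  move: inc_e (E12 e); rewrite /incident; case: (E e) => a1 a2 /=.
  case/orP=> /eqP <- ca; [exists (unl a2) | exists (unl a1)].
    by left; rewrite unlK // eq_sym.
  by right; rewrite unlK.
exists e, b, (fun e' => (unl (E (lift e e')).1, unl (E (lift e e')).2)); split=> //.
- by move=> e'; rewrite /lift_pair /= !unlK // [LHS]surjective_pairing.
- by move=> e'; rewrite -(inj_eq (@lift_inj _ c)) /= !unlK.
Qed.

Lemma monomial_minors_degree0 (K : fieldType) n m (F : 'I_m.+2 -> {set 'I_n})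
    (E : 'I_m.+1 -> 'I_m.+2 * 'I_m.+2) c :
  degree E c = 0%N -> ~ monomial_minors K F E.
Proof.
move=> deg0 minorsF; have col0 e : pair_mx K F E e c = 0.
  have := deg0; rewrite /degree (bigD1 e) //= => /eqP; rewrite addn_eq0 eqb0 negb_or.
  by case/andP=> /andP[c1 c2] _; rewrite mxE Mentry_out.
have := eq_up_to_sign_trans (minorsF (lift c ord0))
  (eq_up_to_sign_sym (det_col'_expand_col (e := ord0) ord0 (fun e' _ => col0 e'))).
by rewrite col0 mul0r => -[] /eqP; rewrite eq_sym ?oppr_eq0 (negbTE (xmon_neq0 _ _)).
Qed.

Lemma quasi_tree_of_monomial_minors (K : fieldType) n m :
  forall (F : 'I_m.+1 -> {set 'I_n}) (E : 'I_m -> 'I_m.+1 * 'I_m.+1),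
  (forall e, (E e).1 != (E e).2) -> monomial_minors K F E -> quasi_tree F.
Proof.
elim: m => [|m IHm] F E E12 minorsF; first exact: quasi_tree1.
have [c] := exists_degree_le1 E12; rewrite leq_eqVlt ltnS leqn0 => /orP[] /eqP degc;
  last by case: (monomial_minors_degree0 degc minorsF).
have [e [b [E' [E_pendant E_lift E'12]]]] := exists_pendant_edge E12 degc.
have Fcb := monomial_minors_branch E_pendant E_lift minorsF.
apply: (quasi_tree_add_leaf Fcb); apply: (IHm _ E' E'12).
exact: (monomial_minors_remove_pendant K E_pendant E_lift Fcb).1.
Qed.

Lemma extend_edges m (E' : 'I_m -> 'I_m.+1 * 'I_m.+1) (c : 'I_m.+2) b :
  (forall e, (E' e).1 < (E' e).2)%N -> injective E' ->
  exists E : 'I_m.+1 -> 'I_m.+2 * 'I_m.+2,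
    [/\ forall e, ((E e).1 < (E e).2)%N, injective E,
        E ord_max = (c, lift c b) \/ E ord_max = (lift c b, c) &
        forall e', E (lift ord_max e') = lift_pair c (E' e')].
Proof.
move=> E'lt E'inj.
pose E e := if unlift ord_max e is Some e' then lift_pair c (E' e')
            else if (c < lift c b)%N then (c, lift c b) else (lift c b, c).
have E_lift e' : E (lift ord_max e') = lift_pair c (E' e') by rewrite /E liftK.
have E_max : E ord_max = if (c < lift c b)%N then (c, lift c b) else (lift c b, c).
  by rewrite /E unlift_none.
have c_max e' : c \notin [:: (E (lift ord_max e')).1; (E (lift ord_max e')).2].
  by rewrite E_lift !inE !eq_liftF.
have c_in_max : c \in [:: (E ord_max).1; (E ord_max).2].
  by rewrite E_max; case: ifP; rewrite !inE eqxx ?orbT.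
exists E; split=> [e|e1 e2|| //].
- case: (unliftP ord_max e) => [e' ->|->].
    by rewrite E_lift /= ltnNge leq_bump2 -ltnNge.
  rewrite E_max; case: ifP => //= /negbT; rewrite -leqNgt leq_eqVlt eq_sym.
  by rewrite (negbTE (neq_bump _ _)).
- case: (unliftP ord_max e1) => [e1' ->|->]; case: (unliftP ord_max e2) => [e2' ->|->] //.
  + by rewrite !E_lift => /lift_pair_inj/E'inj ->.
  + by move=> E12; move: (c_max e1'); rewrite E12 c_in_max.
  + by move=> E12; move: (c_max e2'); rewrite -E12 c_in_max.
- by rewrite E_max; case: ifP; [left|right].
Qed.

Lemma monomial_minors_of_quasi_tree (K : fieldType) n m :
  forall F : 'I_m.+1 -> {set 'I_n}, quasi_tree F ->
  exists E : 'I_m -> 'I_m.+1 * 'I_m.+1,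
    [/\ forall e, ((E e).1 < (E e).2)%N, injective E & monomial_minors K F E].
Proof.
elim: m => [|m IHm] F qtF.
  exists (fun=> (ord0, ord0)); split=> [[]|[]|j] //.
  rewrite det_mx00 /facet_union big_ord1 (ord1 j) setDv [xmon _ _]big_set0.
  exact: eq_up_to_sign_refl.
have [c [b [Fcb qtF']]] := quasi_tree_remove_leaf qtF.
have [E' [E'lt E'inj minorsF']] := IHm _ qtF'.
have [E [Elt Einj E_pendant E_lift]] := extend_edges c b E'lt E'inj.
by exists E; split=> //; apply/(monomial_minors_remove_pendant K E_pendant E_lift Fcb).
Qed.

Lemma rowsub_MDelta (K : fieldType) n t (F : 'I_t -> {set 'I_n}) r
    (R : 'I_r -> 'I_#|[set: pair_idx t]|) E :
  (forall e, val (enum_val (R e)) = E e) -> rowsub R (MDelta K F) = pair_mx K F E.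
Proof. by move=> RE; apply/matrixP=> i k; rewrite !mxE RE. Qed.

Lemma exists_pair_rows r t (E : 'I_r -> 'I_t * 'I_t) :
  (forall e, (E e).1 < (E e).2)%N -> injective E ->
  exists R : 'I_r -> 'I_#|[set: pair_idx t]|,
    injective R /\ forall e, val (enum_val (R e)) = E e.
Proof.
move=> Elt Einj; pose p e : pair_idx t := exist _ (E e) (Elt e).
have pT e : p e \in [set: pair_idx t] by rewrite inE.
exists (fun e => enum_rank_in (pT e) (p e)).
have RK e : enum_val (enum_rank_in (pT e) (p e)) = p e by rewrite enum_rankK_in.
split=> [e1 e2 /(congr1 enum_val)|e]; last by rewrite RK.
by rewrite !RK => /(congr1 val) /Einj.
Qed.

Lemma facet_union_cover n t (F : 'I_t -> {set 'I_n}) :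
  (forall v, exists i, v \in F i) -> facet_union F = setT.
Proof.
move=> cover; apply/setP=> v; rewrite inE.
by have [i vi] := cover v; apply/bigcupP; exists i.
Qed.

Unset Implicit Arguments.
Theorem lemma2p1 (K : fieldType) (n t : nat) (F : 'I_t -> {set 'I_n}) :
  facet_family F ->
  (quasi_tree F <->
   exists r : 'I_t.-1 -> 'I_#|[set: pair_idx t]|,
     injective r /\
     forall j : 'I_t,
       let Msharp := rowsub r (MDelta K F) in
       \det (col' j Msharp) = xmon K (setT :\: F j) \/
       \det (col' j Msharp) = - xmon K (setT :\: F j)).
Proof.
case=> + _ cover; case: t F cover => // m F /facet_union_cover UF _.
split=> [qtF | [R [R_inj minorsR]]].
- have [E [Elt Einj minorsE]] := monomial_minors_of_quasi_tree K qtF.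
  have [R [R_inj RE]] := exists_pair_rows Elt Einj.
  by exists R; split=> // j; rewrite /= (rowsub_MDelta K F RE) -UF; apply: minorsE.
- apply: (@quasi_tree_of_monomial_minors K _ _ _ (fun e => val (enum_val (R e)))).
    by move=> e; rewrite neq_ltn (valP (enum_val (R e))).
  by move=> j; rewrite UF -(rowsub_MDelta K F (fun e => erefl)); apply: minorsR.
Qed.
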